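(* For all integers $n \geq k \geq 1$ there exists an oriented graph on $n$ vertices with exactly $k$ weak kings.
   Context: An oriented graph is a digraph with no loops and no pair of symmetric arcs. For vertices $u,v$ write $u(1\text{-}0)v$ if there is an arc from $u$ to $v$, and $u(0\text{-}0)v$ if there is no arc between $u$ and $v$. A vertex $v$ is weakly reachable within two steps from $u$ if $u(1\text{-}0)v$, or $u(0\text{-}0)v$, or for some vertex $w$ one has $u(1\text{-}0)w(1\text{-}0)v$, or $u(1\text{-}0)w(0\text{-}0)v$, or $u(0\text{-}0)w(1\text{-}0)v$. A vertex $u$ of an oriented graph $D$ is a weak king if every other vertex of $D$ is weakly reachable within two steps from $u$. *)

From mathcomp Require Import all_boot.
Set Implicit Arguments. Unset Strict Implicit. Unset Printing Implicit Defensive.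

Definition oriented (n : nat) (arc : rel 'I_n) : Prop :=
  (forall u, ~~ arc u u) /\ (forall u v, arc u v -> ~~ arc v u).

Definition arc10 (n : nat) (arc : rel 'I_n) (u v : 'I_n) : bool := arc u v.
Definition arc00 (n : nat) (arc : rel 'I_n) (u v : 'I_n) : bool :=
  ~~ arc u v && ~~ arc v u.

Definition weakly_reach2 (n : nat) (arc : rel 'I_n) (u v : 'I_n) : bool :=
  [|| arc10 arc u v, arc00 arc u v
    | [exists w, [|| arc10 arc u w && arc10 arc w v,
                     arc10 arc u w && arc00 arc w v
                   | arc00 arc u w && arc10 arc w v]]].

Definition weak_king (n : nat) (arc : rel 'I_n) (u : 'I_n) : bool :=
  [forall v, (v != u) ==> weakly_reach2 arc u v].

From mathcomp Require Import all_boot.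

(* Orient every arc from the first k vertices to the others.  The first k
   vertices are pairwise non-adjacent and dominate the rest, so each of them
   reaches everything in one step.  A later vertex u has no out-arc, and vertex
   0 has an arc to u but no in-arc, so 0 is not weakly reachable from u. *)

Lemma card_ord_ltn (n k : nat) : k <= n -> #|[set u : 'I_n | u < k]| = k.
Proof.
move=> lekn; rewrite -sum1_card; under eq_bigl do rewrite inE.
by rewrite (big_ord_narrow lekn) sum1_card card_ord.
Qed.

Lemma weakly_reach2_from_sink (n : nat) (arc : rel 'I_n) (u v : 'I_n) :
  (forall w, ~~ arc u w) -> (forall w, ~~ arc w v) -> arc v u ->
  ~~ weakly_reach2 arc u v.
Proof.
move=> u_sink v_source arc_vu.
rewrite /weakly_reach2 /arc10 /arc00 negb_or (negbTE (u_sink v)) arc_vu /=.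
by apply/existsPn=> w; rewrite (negbTE (u_sink w)) (negbTE (v_source w)) !andbF.
Qed.

Section PrefixArc.

Variables (n k : nat).

Definition prefix_arc : rel 'I_n := fun u v => (u < k) && (k <= v).

Lemma prefix_arc_oriented : oriented prefix_arc.
Proof.
split=> [u | u v /andP[ltuk lekv]]; rewrite /prefix_arc.
  by case: leqP.
by rewrite (leqNgt k u) ltuk andbF.
Qed.

Lemma prefix_weak_king (u : 'I_n) : u < k -> weak_king prefix_arc u.
Proof.
move=> ltuk; apply/forallP=> v; apply/implyP=> _.
rewrite /weakly_reach2 /arc10 /arc00 /prefix_arc ltuk /=.
by case: (leqP k v) => //= ltvk; rewrite leqNgt ltuk.
Qed.

Lemma prefix_not_weak_king (ltk0n : 0 < k <= n) (u : 'I_n) :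
  k <= u -> ~~ weak_king prefix_arc u.
Proof.
case/andP: ltk0n => lt0k lekn leku; pose v0 := Ordinal (leq_trans lt0k lekn).
have ne_v0u : v0 != u by rewrite -val_eqE neq_ltn (leq_trans lt0k leku).
apply/forallPn; exists v0; rewrite negb_imply ne_v0u.
apply: weakly_reach2_from_sink => [w | w | ]; rewrite /prefix_arc /=.
- by rewrite ltnNge leku.
- by rewrite (leqNgt k 0) lt0k andbF.
- by rewrite lt0k.
Qed.

Lemma prefix_weak_kings : 0 < k <= n ->
  [set u | weak_king prefix_arc u] = [set u : 'I_n | u < k].
Proof.
move=> ltk0n; apply/setP=> u; rewrite !inE.
by case: (ltnP u k) => [/prefix_weak_king | /(prefix_not_weak_king ltk0n)/negbTE].
Qed.

End PrefixArc.

Theorem theorem7 (n k : nat) (hk : 1 <= k) (hkn : k <= n) :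
  exists arc : rel 'I_n, oriented arc /\ #|[set u | weak_king arc u]| = k.
Proof.
exists (prefix_arc n k); split; first exact: prefix_arc_oriented.
by rewrite prefix_weak_kings ?hk ?hkn // card_ord_ltn.
Qed.
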